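(* Let $m\ge1$, $\overline{n}\ge 1$, and for $i=1,\dots,m$ let $D^{(i)}\in\mathbb{R}^{\ell_i\times\overline{n}}$ and $V^{(i)}\in\mathbb{R}^{\ell_i}$, where the $D^{(i)}$ are scaled so that $\max_i\|(D^{(i)})^TD^{(i)}\|_2\le 1$ (spectral norm). For $C\in\mathbb{R}^{\overline{n}\times m}$ with columns $c^{(1)},\dots,c^{(m)}$ define $D\star C=[D^{(1)}c^{(1)},\dots,D^{(m)}c^{(m)}]$, $\|D\star C-V\|_2^2=\sum_{i=1}^m\|D^{(i)}c^{(i)}-V^{(i)}\|_2^2$, and, for $W=[w^{(1)},\dots,w^{(m)}]$ with $w^{(i)}\in\mathbb{R}^{\ell_i}$, $D^T\star W$ the $\overline{n}\times m$ matrix with columns $(D^{(i)})^Tw^{(i)}$. Let $\gamma>0$ and $$F(C)=\|D\star C-V\|_2^2+\gamma\|C\|_{2,0},$$ where $\|C\|_{2,0}$ is the number of nonzero rows of $C$. Given $C^0\in\mathbb{R}^{\overline{n}\times m}$, generate a sequence by $$S^{k+1}=\operatorname{supp}\Big(H_{\sqrt{\gamma}}\big(C^k+D^T\star(V-D\star C^k)\big)\Big),\qquad C^{k+1}\in\operatorname*{argmin}_{C:\ \operatorname{supp}(C)\subset S^{k+1}}\|D\star C-V\|_2^2,$$ where $H_a$ acts row-wise on a matrix, setting a row $x$ to $0$ if $\|x\|_2\le a$ and leaving it unchanged otherwise, and $\operatorname{supp}(C)$ is the set of indices of nonzero rows of $C$. Then $F(C^{k+1})\le F(C^k)$ for all $k$,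 and there are subsequences of $(C^k)$ that converge to local minimizers of $F$. In addition, if $D$ is coercive (there exists $\delta>0$ with $\|D\star C\|_2\ge\delta\|C\|_2$ for all $C$), then the sequence $(C^k)$ converges to a local minimizer of $F$.
   Context: This is the group hard-iterative thresholding scheme for the group-sparse regression problem $\min_C \sum_{i=1}^m\|D^{(i)}c^{(i)}-V^{(i)}\|_2^2+\gamma\|C\|_{2,0}$, in which the $m$ columns of $C$ (one per data source) are required to share a common row support. Norms $\|C\|_2$ of matrices are Frobenius norms. *)

From HB Require Import structures.
From mathcomp Require Import all_boot all_order all_algebra.
From mathcomp Require Import all_classical all_reals all_analysis.
Set Implicit Arguments. Unset Strict Implicit. Unset Printing Implicit Defensive.
Import Order.TTheory GRing.Theory Num.Theory.
Import numFieldNormedType.Exports.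
Local Open Scope ring_scope.

Section GroupIHT.
Variable R : realType.

Definition sqnorm (p q : nat) (A : 'M[R]_(p, q)) : R :=
  \sum_(i < p) \sum_(j < q) A i j ^+ 2.
Definition norm2 (p q : nat) (A : 'M[R]_(p, q)) : R := Num.sqrt (sqnorm A).

(* spectral norm bound ||A||_2 <= c, written out as the operator-norm bound *)
Definition spec_norm_le (p : nat) (A : 'M[R]_p) (c : R) : Prop :=
  forall x : 'cV[R]_p, norm2 (A *m x) <= c * norm2 x.

Variables (m n : nat) (ell : 'I_m -> nat).
Variable D : forall i : 'I_m, 'M[R]_(ell i, n).
Variable V : forall i : 'I_m, 'cV[R]_(ell i).

Definition Dstar (C : 'M[R]_(n, m)) : forall i : 'I_m, 'cV[R]_(ell i) :=
  fun i => D i *m col i C.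

Definition DTstar (W : forall i : 'I_m, 'cV[R]_(ell i)) : 'M[R]_(n, m) :=
  \matrix_(j < n, i < m) ((D i)^T *m W i) j 0.

Definition resid (C : 'M[R]_(n, m)) : R :=
  \sum_(i < m) sqnorm (Dstar C i - V i).

Definition Dstar_norm (C : 'M[R]_(n, m)) : R :=
  Num.sqrt (\sum_(i < m) sqnorm (Dstar C i)).

Definition supp (C : 'M[R]_(n, m)) : {set 'I_n} := [set j | row j C != 0].

Definition norm20 (C : 'M[R]_(n, m)) : nat := #|supp C|.

Definition Fobj (gamma : R) (C : 'M[R]_(n, m)) : R :=
  resid C + gamma * (norm20 C)%:R.

Definition Hthr (a : R) (X : 'M[R]_(n, m)) : 'M[R]_(n, m) :=
  \matrix_(j < n, i < m) (if norm2 (row j X) <= a then 0 else X j i).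

Definition iht_step (gamma : R) (C C' : 'M[R]_(n, m)) : Prop :=
  let S := supp (Hthr (Num.sqrt gamma)
                   (C + DTstar (fun i => V i - Dstar C i))) in
  supp C' \subset S /\
  (forall C'' : 'M[R]_(n, m), supp C'' \subset S -> resid C' <= resid C'').

Definition local_min (gamma : R) (L : 'M[R]_(n, m)) : Prop :=
  \forall C \near L, Fobj gamma L <= Fobj gamma C.

Definition coercive : Prop :=
  exists2 delta : R, 0 < delta &
    forall C : 'M[R]_(n, m), delta * norm2 C <= Dstar_norm C.

End GroupIHT.

(* Let B(C) = C + D^T*(V - D*C).  Because ||(D^(i))^T D^(i)|| <= 1, the residual obeys
   ||D*X - V||^2 <= ||D*C - V||^2 + ||X - B(C)||^2 - ||C - B(C)||^2, so F(X) - F(C) is at most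
   the change of the separable cost ||X - B(C)||^2 + gamma ||X||_{2,0}.  The row-wise hard
   threshold of B(C) minimizes that cost, and least squares on its support does no worse:
   F decreases.  A subsequential limit L minimizes the residual on a support chosen infinitely
   often, hence on supp L; matrices near L have at least the support of L and each extra row
   costs gamma, so L is a local minimizer.  If D is coercive, least squares on a fixed support
   has a unique solution, so F(C^(k+1)) takes finitely many values and is eventually constant;
   from then on a step either fixes C^k or strictly shrinks its support, so C^k stabilizes. *)

From HB Require Import structures.
From mathcomp Require Import all_boot all_order all_algebra.
From mathcomp Require Import all_classical all_reals all_analysis.
From mathcomp Require Import ring lra.
Import Order.TTheory GRing.Theory Num.Theory.
Import numFieldNormedType.Exports.
Local Open Scope classical_set_scope.
Local Open Scope ring_scope.
Set Implicit Arguments. Unset Strict Implicit. Unset Printing Implicit Defensive.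

Section Frobenius.
Variable R : realType.
Implicit Types p q : nat.

Lemma sqnorm_ge0 p q (A : 'M[R]_(p, q)) : 0 <= sqnorm A.
Proof. by apply: sumr_ge0 => i _; apply: sumr_ge0 => j _; apply: sqr_ge0. Qed.

Lemma sqnorm_eq0 p q (A : 'M[R]_(p, q)) : (sqnorm A == 0) = (A == 0).
Proof.
apply/idP/eqP => [|->]; last first.
  by apply/eqP/big1 => i _; apply: big1 => j _; rewrite mxE expr0n.
move=> /eqP /psumr_eq0P A0; apply/matrixP => i j; rewrite mxE.
have /psumr_eq0P Ai0 := A0 (fun i _ => sumr_ge0 _ (fun j _ => sqr_ge0 (A i j))) i isT.
by apply/eqP; rewrite -sqrf_eq0; apply/eqP/Ai0 => // k _; apply: sqr_ge0.
Qed.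

Lemma norm2_eq0 p q (A : 'M[R]_(p, q)) : (norm2 A == 0) = (A == 0).
Proof. by rewrite /norm2 sqrtr_eq0 -sqnorm_eq0 eq_le sqnorm_ge0 andbT. Qed.

Lemma sqnorm0 p q : sqnorm (0 : 'M[R]_(p, q)) = 0.
Proof. by apply/eqP; rewrite sqnorm_eq0. Qed.

Lemma sqnormN p q (A : 'M[R]_(p, q)) : sqnorm (- A) = sqnorm A.
Proof. by apply: eq_bigr => i _; apply: eq_bigr => j _; rewrite mxE sqrrN. Qed.

Lemma sqnorm_rows p q (A : 'M[R]_(p, q)) : sqnorm A = \sum_i sqnorm (row i A).
Proof.
apply: eq_bigr => i _; rewrite /sqnorm big_ord1.
by apply: eq_bigr => j _; rewrite !mxE.
Qed.

Lemma sqnorm_cols p q (A : 'M[R]_(p, q)) : sqnorm A = \sum_j sqnorm (col j A).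
Proof.
rewrite /sqnorm exchange_big; apply: eq_bigr => j _; apply: eq_bigr => i _.
by rewrite big_ord1 !mxE.
Qed.

Lemma sqnorm_midpoint p q (A B : 'M[R]_(p, q)) :
  4 * sqnorm (2^-1 *: (A + B)) + sqnorm (A - B) = 2 * sqnorm A + 2 * sqnorm B.
Proof.
rewrite /sqnorm !mulr_sumr -!big_split; apply: eq_bigr => i _.
rewrite !mulr_sumr -!big_split; apply: eq_bigr => j _.
by rewrite !mxE /=; field.
Qed.

Definition dotcv p (u v : 'cV[R]_p) : R := (u^T *m v) ord0 ord0.

Lemma sqnorm_dotcv p (u : 'cV[R]_p) : sqnorm u = dotcv u u.
Proof.
by rewrite /dotcv mxE; apply: eq_bigr => k _; rewrite big_ord1 mxE expr2.
Qed.

Lemma dotcvC p (u v : 'cV[R]_p) : dotcv u v = dotcv v u.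
Proof. by rewrite /dotcv -[v^T *m u]trmxK trmx_mul trmxK [RHS]mxE. Qed.

Lemma dotcvDl p (u v w : 'cV[R]_p) : dotcv (u + v) w = dotcv u w + dotcv v w.
Proof. by rewrite /dotcv linearD mulmxDl mxE. Qed.

Lemma dotcvNl p (u w : 'cV[R]_p) : dotcv (- u) w = - dotcv u w.
Proof. by rewrite /dotcv linearN mulNmx mxE. Qed.

Lemma dotcv_mulmxl p q (A : 'M[R]_(p, q)) u v : dotcv (A *m u) v = dotcv u (A^T *m v).
Proof. by rewrite /dotcv trmx_mul mulmxA. Qed.

Lemma sqnormD_cv p (u v : 'cV[R]_p) :
  sqnorm (u + v) = sqnorm u + 2 * dotcv u v + sqnorm v.
Proof. by rewrite !sqnorm_dotcv !dotcvDl !(dotcvC _ (u + v)) !dotcvDl (dotcvC v u); ring. Qed.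

Lemma sqnorm_mulmx_le p q (A : 'M[R]_(p, q)) (y : 'cV[R]_q) :
  spec_norm_le (A^T *m A) 1 -> sqnorm (A *m y) <= sqnorm y.
Proof.
move=> /(_ y); rewrite mul1r ler_sqrt ?sqnorm_ge0 // => AtAy_le.
(* 0 <= |y - A^T A y|^2 = |y|^2 - 2 |A y|^2 + |A^T A y|^2 <= 2 |y|^2 - 2 |A y|^2 *)
have AtAyy : dotcv (A^T *m A *m y) y = sqnorm (A *m y).
  by rewrite -mulmxA dotcv_mulmxl trmxK sqnorm_dotcv.
have := sqnorm_ge0 (y - A^T *m A *m y).
by rewrite sqnormD_cv sqnormN (dotcvC y) dotcvNl AtAyy; lra.
Qed.

Lemma sqnorm_mulmxD_le p q (A : 'M[R]_(p, q)) (e : 'cV[R]_q) (w : 'cV[R]_p) :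
  spec_norm_le (A^T *m A) 1 ->
  sqnorm (A *m e + w) <= sqnorm w + sqnorm (e + A^T *m w) - sqnorm (A^T *m w).
Proof.
by move=> /(sqnorm_mulmx_le e); rewrite !sqnormD_cv dotcv_mulmxl; lra.
Qed.

End Frobenius.

Section Thresholding.
Variable R : realType.
Variable g : R.
Hypothesis g_gt0 : 0 < g.

Definition hard_thr q (a : R) (b : 'rV[R]_q) := if norm2 b <= a then 0 else b.

Definition row_cost q (b y : 'rV[R]_q) : R := sqnorm (y - b) + g * (y != 0)%:R.

Lemma row_cost_hard_thr_le q (b y : 'rV[R]_q) :
  row_cost b (hard_thr (Num.sqrt g) b) <= row_cost b y.
Proof.
rewrite /row_cost /hard_thr /norm2 ler_sqrt ?(ltW g_gt0) //.
have b_neq0 : ~~ (sqnorm b <= g) -> (b != 0) = true.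
  by move=> b_large; apply: contraNneq b_large => ->; rewrite sqnorm0 ltW.
have := sqnorm_ge0 (y - b).
case: (eqVneq y 0) => [-> | y_neq0]; case: ifPn => [b_small | b_large];
  rewrite ?subrr ?sub0r ?sqnormN ?sqnorm0 ?add0r ?eqxx ?y_neq0 ?b_neq0 //=.
- by rewrite -ltNge in b_large; lra.
- by lra.
- by lra.
Qed.

Lemma row_cost_hard_thr_eq q (b y : 'rV[R]_q) (t := hard_thr (Num.sqrt g) b) :
  row_cost b t = row_cost b y -> y = t \/ (t = 0 /\ y != 0).
Proof.
rewrite /t /row_cost /hard_thr /norm2 ler_sqrt ?(ltW g_gt0) //.
have b_neq0 : ~~ (sqnorm b <= g) -> (b != 0) = true.
  by move=> b_large; apply: contraNneq b_large => ->; rewrite sqnorm0 ltW.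
case: (eqVneq y 0) => [-> | y_neq0]; case: ifPn => [b_small | b_large];
  rewrite ?subrr ?sub0r ?sqnormN ?sqnorm0 ?add0r ?eqxx ?y_neq0 ?b_neq0 //=.
- by left.
- by move=> E; exfalso; lra.
- by right.
- move=> /eqP; rewrite eq_sym -subr_eq0 addrK sqnorm_eq0 subr_eq0.
  by move=> /eqP; left.
Qed.

Variables n m : nat.
Implicit Types B X : 'M[R]_(n, m).

Definition thr_cost B X : R := sqnorm (X - B) + g * (norm20 X)%:R.

Lemma thr_costE B X : thr_cost B X = \sum_j row_cost (row j B) (row j X).
Proof.
rewrite /thr_cost /norm20 sqnorm_rows -sum1_card natr_sum mulr_sumr.
rewrite [X in _ + X]big_mkcond -big_split; apply: eq_bigr => j _.
by rewrite /supp inE linearB /row_cost; case: (row j X != 0); rewrite /= ?mulr0.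
Qed.

Lemma row_Hthr a X j : row j (Hthr a X) = hard_thr a (row j X).
Proof. by apply/rowP => k; rewrite /hard_thr !mxE; case: ifP; rewrite ?mxE. Qed.

Lemma Hthr_cost_le B X : thr_cost B (Hthr (Num.sqrt g) B) <= thr_cost B X.
Proof.
by rewrite !thr_costE; apply: ler_sum => j _; rewrite row_Hthr row_cost_hard_thr_le.
Qed.

Lemma Hthr_cost_eq B X (T := Hthr (Num.sqrt g) B) :
  thr_cost B T = thr_cost B X -> X = T \/ supp T \proper supp X.
Proof.
rewrite !thr_costE => /eqP; rewrite eq_sym -subr_eq0 -sumrB.
move=> /eqP /psumr_eq0P rows_eq.
have {}rows_eq j : row j X = row j T \/ (row j T = 0 /\ row j X != 0).
  rewrite /T row_Hthr; apply: row_cost_hard_thr_eq; rewrite -row_Hthr.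
  apply/eqP; rewrite eq_sym -subr_eq0; apply/eqP/rows_eq => // i _.
  by rewrite subr_ge0 row_Hthr row_cost_hard_thr_le.
case: (eqVneq X T) => [-> | X_neq_T]; first by left.
have /existsP [j rowj_neq] : [exists j, row j X != row j T].
  apply: contraNT X_neq_T => /existsPn rows_eqT.
  by apply/eqP/row_matrixP => j; apply/eqP/negbNE/rows_eqT.
have [Tj0 Xj_neq0] : row j T = 0 /\ row j X != 0.
  by case: (rows_eq j) => // /eqP; rewrite (negbTE rowj_neq).
right; rewrite properE; apply/andP; split.
  apply/fintype.subsetP => k; rewrite !inE.
  by case: (rows_eq k) => [-> // | [-> ]]; rewrite eqxx.
by apply/subsetPn; exists j; rewrite inE ?Tj0 ?eqxx.
Qed.

End Thresholding.

Lemma closed_cvg_frequently (T : topologicalType) (A : set T) (u : nat -> T) l :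
  closed A -> u @ \oo --> l -> (forall N, exists2 j, (N <= j)%N & A (u j)) -> A l.
Proof.
move=> A_closed u_l u_freq; apply: contrapT => notAl.
have /u_l [N _ u_notA] : nbhs l (~` A).
  by apply: open_nbhs_nbhs; split => //; exact: closed_openC.
by have [j /u_notA] := u_freq N.
Qed.

Lemma finite_frequently (T : finType) (s : nat -> T) :
  exists t, forall N, exists2 j, (N <= j)%N & s j = t.
Proof.
apply: contrapT => /forallNP never.
have {}never t : exists N, forall j, (N <= j)%N -> s j <> t.
  have /existsNP [N] := never t.
  by move=> /forall2NP N_never; exists N => j Nj sj_t; case: (N_never j) => [/(_ Nj)|].
pose N := (\max_t sval (cid (never t)))%N.
by apply: (svalP (cid (never (s N))) N) => //; exact: leq_bigmax.
Qed.

Lemma continuous_sumr (R : numFieldType) (T : topologicalType) (I : finType)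
    (f : I -> T -> R) :
  (forall i, continuous (f i)) -> continuous (fun x => \sum_i f i x).
Proof. by move=> f_cont; apply: continuous_big => //; exact: add_continuous. Qed.

Section LeastSquares.
Variables (R : realType) (m n : nat) (ell : 'I_m -> nat).
Variable D : forall i : 'I_m, 'M[R]_(ell i, n).
Variable V : forall i : 'I_m, 'cV[R]_(ell i).
Implicit Types (S : {set 'I_n}) (A L X Y : 'M[R]_(n, m)).

Lemma supp_subset_row0 S X j : supp X \subset S -> j \notin S -> row j X = 0.
Proof. by move=> XS; apply: contraNeq => rowj_neq0; apply: (fintype.subsetP XS); rewrite inE. Qed.

Lemma supp_subset_near L : \forall X \near L, supp L \subset supp X.
Proof.
have near_row j : \forall X \near L, j \in supp L -> j \in supp X.
  have [jL | _] := boolP (j \in supp L); last by near=> X.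
  have /existsP [i Lji] : [exists i, L j i != 0].
    move: jL; rewrite inE; apply: contraNT => /existsPn Lj0.
    by apply/eqP/rowP => i; rewrite !mxE; apply/eqP/negbNE/Lj0.
  near=> X => _; rewrite inE.
  have : X j i != 0.
    by near: X; exact: cvgr_neq0 (@coord_continuous R n m j i L) Lji.
  by apply: contra_neq => /rowP /(_ i); rewrite !mxE.
near=> X; apply/fintype.subsetP.
by near: X; apply: filter_forall near_row.
Unshelve. all: by end_near.
Qed.

Definition ls_min_on S X :=
  supp X \subset S /\ forall Y, supp Y \subset S -> resid D V X <= resid D V Y.

Lemma ls_min_on_supp S X : ls_min_on S X -> ls_min_on (supp X) X.
Proof. by move=> [XS X_min]; split => // Y YX; apply/X_min/(fintype.subset_trans YX). Qed.

Lemma Fobj_ls_min_le g X Y :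
  0 <= g -> ls_min_on (supp Y) X -> Fobj D V g X <= Fobj D V g Y.
Proof.
move=> g_ge0 [XY X_min]; rewrite /Fobj lerD ?X_min //.
by rewrite ler_wpM2l // ler_nat subset_leq_card.
Qed.

Lemma resid_continuous : continuous (resid D V).
Proof.
apply: continuous_sumr => i; apply: continuous_sumr => r; apply: continuous_sumr => k.
have -> : (fun X => (Dstar D X i - V i) r k ^+ 2) =
          (fun X => (\sum_j D i r j * X j i - V i r k) ^+ 2).
  by apply/funext => X; rewrite !mxE; under eq_bigr do rewrite mxE.
have affine_cont : continuous (fun X : 'M[R]_(n, m) => \sum_j D i r j * X j i - V i r k).
  move=> X; apply: continuousB; last exact: cst_continuous.
  apply: continuous_sumr => j {}X.
  by apply: continuousM; [exact: cst_continuous | exact: coord_continuous].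
move=> X; apply: (continuous_comp (g := fun x : R => x ^+ 2) (affine_cont X)).
exact: exprn_continuous.
Qed.

Lemma ls_min_on_local_min g L : 0 < g -> ls_min_on (supp L) L -> local_min D V g L.
Proof.
move=> g_gt0 L_min; near=> X.
have LX : supp L \subset supp X by near: X; exact: supp_subset_near.
have [XL | XL] := eqVneq (supp X) (supp L).
  by apply: Fobj_ls_min_le; rewrite ?XL // ltW.
have resid_close : `|resid D V L - resid D V X| < g.
  by near: X; apply: cvgr_dist_lt g_gt0; exact: resid_continuous.
have : (#|supp L| + 1 <= #|supp X|)%N.
  by rewrite addn1 proper_card // finset.properEneq eq_sym XL LX.
rewrite -(ler_nat R) natrD => /(ler_wpM2l (ltW g_gt0)).
rewrite /Fobj /norm20 mulrDr mulr1; move: resid_close => /ltr_normlW; lra.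
Unshelve. all: by end_near.
Qed.

Lemma resid_midpoint X Y :
  4 * resid D V (2^-1 *: (X + Y)) + \sum_i sqnorm (Dstar D (X - Y) i) =
  2 * resid D V X + 2 * resid D V Y.
Proof.
rewrite /resid !mulr_sumr -!big_split; apply: eq_bigr => i _ /=.
have -> : Dstar D (2^-1 *: (X + Y)) i - V i =
          2^-1 *: ((Dstar D X i - V i) + (Dstar D Y i - V i)).
  rewrite /Dstar linearZ linearD /= -scalemxAr mulmxDr.
  by apply/matrixP => a b; rewrite !mxE; field.
have -> : Dstar D (X - Y) i = (Dstar D X i - V i) - (Dstar D Y i - V i).
  by rewrite /Dstar linearB mulmxBr opprB addrA subrK.
exact: sqnorm_midpoint.
Qed.

Lemma coercive_Dstar_eq0 X :
  coercive D -> \sum_i sqnorm (Dstar D X i) = 0 -> X = 0.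
Proof.
move=> [delta delta_gt0 D_coercive] DX0; apply/eqP.
rewrite -norm2_eq0 eq_le sqrtr_ge0 andbT -(pmulr_rle0 _ delta_gt0).
by have := D_coercive X; rewrite /Dstar_norm DX0 sqrtr0.
Qed.

Lemma ls_min_on_unique S X Y :
  coercive D -> ls_min_on S X -> ls_min_on S Y -> X = Y.
Proof.
move=> D_coercive [XS X_min] [YS Y_min]; apply/eqP; rewrite -subr_eq0; apply/eqP.
pose Z := 2^-1 *: (X + Y).
have ZS : supp Z \subset S.
  apply/fintype.subsetP => j; rewrite inE; apply: contraR => jNS.
  have -> : row j Z = 2^-1 *: (row j X + row j Y) by rewrite linearZ linearD.
  by rewrite (supp_subset_row0 XS jNS) (supp_subset_row0 YS jNS) addr0 scaler0.
apply: (coercive_Dstar_eq0 D_coercive); apply/eqP.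
rewrite eq_le sumr_ge0 ?andbT => [|i _]; last exact: sqnorm_ge0.
have := resid_midpoint X Y; have := X_min Z ZS; have := Y_min Z ZS.
have := X_min Y YS; have := Y_min X XS; lra.
Qed.

Lemma cvg_ls_min_on S (u : nat -> 'M[R]_(n, m)) L :
  u @ \oo --> L -> (forall N, exists2 j, (N <= j)%N & ls_min_on S (u j)) ->
  ls_min_on S L.
Proof.
move=> u_L u_freq; split.
  apply/fintype.subsetP => a; apply: contraTT => aNS; rewrite inE negbK.
  apply/eqP/rowP => b; rewrite !mxE.
  apply: (closed_cvg_frequently (@closed_eq R 0)).
    exact: (continuous_cvg _ (@coord_continuous R n m a b L) u_L).
  move=> N; have [j Nj [ujS _]] := u_freq N; exists j => //=.
  by have /rowP /(_ b) := supp_subset_row0 ujS aNS; rewrite !mxE.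
move=> Y YS; apply: (closed_cvg_frequently (@closed_le R (resid D V Y)) (u := resid D V \o u)).
  by apply: continuous_cvg => //; exact: resid_continuous.
by move=> N; have [j Nj [_ uj_min]] := u_freq N; exists j => //; exact: uj_min.
Qed.

End LeastSquares.

Lemma eventually_const_potential (T : Type) (u : nat -> T) (mu : nat -> nat) K0 :
  (forall k, (K0 <= k)%N -> (mu k.+1 <= mu k)%N /\ (u k.+1 <> u k -> (mu k.+1 < mu k)%N)) ->
  exists K, forall k, (K <= k)%N -> u k = u K.
Proof.
move=> mu_step.
have mu_nonincr k d : (K0 <= k)%N -> (mu (k + d) <= mu k)%N.
  move=> K0k; elim: d => [|d IHd]; first by rewrite addn0.
  by apply: leq_trans IHd; rewrite addnS; apply: (mu_step _ (leq_trans K0k (leq_addr _ _))).1.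
pose attained : pred nat := fun v => `[< exists2 k, (K0 <= k)%N & mu k = v >].
have attained_ex : exists v, attained v by exists (mu K0); apply/asboolP; exists K0.
(* From the first K where mu reaches its least value beyond K0, mu stays put, so u does. *)
have [_ /asboolP [K K0K <-] mu_min] := ex_minnP attained_ex.
exists K => k /subnKC <-; elim: (k - K)%N => [|d IHd]; first by rewrite addn0.
have K0Kd : (K0 <= K + d)%N by exact: leq_trans K0K (leq_addr _ _).
rewrite addnS -IHd; apply: contrapT => /(mu_step _ K0Kd).2.
rewrite ltnNge => /negP; apply; rewrite -addnS.
apply: leq_trans (mu_nonincr K d K0K) _.
by apply: mu_min; apply/asboolP; exists (K + d.+1)%N => //; rewrite addnS ltnW.
Qed.

Lemma nonincreasing_eventually_const d (X : porderType d) (I : finType)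
    (u : nat -> X) (s : nat -> I) :
  (forall k, (u k.+1 <= u k)%O) -> (forall k j, s k = s j -> u k = u j) ->
  exists K, forall k, (K <= k)%N -> u k = u K.
Proof.
move=> u_nonincr u_label.
pose below k := [set t | `[< exists2 j, s j = t & (u j < u k)%O >]]%SET.
apply: (@eventually_const_potential _ u (fun k => #|below k|) 0) => k _.
have below_sub : below k.+1 \subset below k.
  apply/fintype.subsetP => t; rewrite !inE => -[j sj_t uj_lt].
  by exists j => //; exact: lt_le_trans uj_lt (u_nonincr k).
split => [|u_neq]; first exact: subset_leq_card.
apply: proper_card; rewrite properE below_sub /=; apply/subsetPn; exists (s k.+1).
  by rewrite inE; apply/asboolP; exists k.+1 => //; rewrite lt_neqAle u_nonincr andbT; apply/eqP.
by rewrite inE; apply/negP => /asboolP [j /u_label ->]; rewrite ltxx.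
Qed.

Section IHT.
Variables (R : realType) (m n : nat) (ell : 'I_m -> nat).
Variable D : forall i : 'I_m, 'M[R]_(ell i, n).
Variable V : forall i : 'I_m, 'cV[R]_(ell i).
Implicit Types (A X : 'M[R]_(n, m)).

Definition grad_step A := A + DTstar D (fun i => V i - Dstar D A i).

Hypothesis D_scaled : forall i, spec_norm_le ((D i)^T *m D i) 1.

Lemma resid_le_surrogate A X :
  resid D V X <= resid D V A + sqnorm (X - grad_step A) - sqnorm (A - grad_step A).
Proof.
rewrite /resid (sqnorm_cols (X - _)) (sqnorm_cols (A - _)) -addrA -sumrB -big_split /=.
apply: ler_sum => i _.
pose e := col i X - col i A; pose w := Dstar D A i - V i.
have -> : Dstar D X i - V i = D i *m e + w by rewrite /w /e /Dstar mulmxBr addrA subrK.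
have -> : col i (A - grad_step A) = (D i)^T *m w.
  by rewrite /w -[Dstar D A i - V i]opprB mulmxN; apply/colP => k; rewrite !mxE; ring.
have -> : col i (X - grad_step A) = e + (D i)^T *m w.
  by rewrite /w /e -[Dstar D A i - V i]opprB mulmxN; apply/colP => k; rewrite !mxE; ring.
by have := sqnorm_mulmxD_le e w (D_scaled i); lra.
Qed.

Variable g : R.
Hypothesis g_gt0 : 0 < g.

Lemma Fobj_le_thr_cost A X :
  Fobj D V g X <= Fobj D V g A + (thr_cost g (grad_step A) X - thr_cost g (grad_step A) A).
Proof. by have := resid_le_surrogate A X; rewrite /Fobj /thr_cost; lra. Qed.

Local Notation thr_point A := (Hthr (Num.sqrt g) (grad_step A)).

Lemma iht_stepE A A' : iht_step D V g A A' = ls_min_on D V (supp (thr_point A)) A'.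
Proof. by []. Qed.

Lemma iht_step_le_thr A A' : iht_step D V g A A' -> Fobj D V g A' <= Fobj D V g (thr_point A).
Proof. by rewrite iht_stepE; apply: Fobj_ls_min_le; exact: ltW. Qed.

Lemma iht_descent A A' : iht_step D V g A A' -> Fobj D V g A' <= Fobj D V g A.
Proof.
move=> /iht_step_le_thr /le_trans; apply.
have := Fobj_le_thr_cost A (thr_point A); have := Hthr_cost_le g_gt0 (grad_step A) A.
lra.
Qed.

Lemma iht_step_eq A A' : coercive D -> iht_step D V g A A' ->
  Fobj D V g A' = Fobj D V g A -> A' = A \/ (norm20 A' < norm20 A)%N.
Proof.
move=> D_coercive stepA FA'_eq.
pose T := thr_point A.
have FA'T := iht_step_le_thr stepA.
have FT_le := Fobj_le_thr_cost A T.
have cost_le := Hthr_cost_le g_gt0 (grad_step A) A.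
rewrite iht_stepE -/T in stepA; have [A'T A'_min] := stepA.
have resid_le : resid D V A' <= resid D V T by apply: A'_min.
have : (norm20 A' <= norm20 T)%N by exact: subset_leq_card.
rewrite -(ler_nat R) => /(ler_wpM2l (ltW g_gt0)) card_le.
rewrite /Fobj in FA'T FT_le FA'_eq.
have resid_eq : resid D V A' = resid D V T by lra.
have cost_eq : thr_cost g (grad_step A) T = thr_cost g (grad_step A) A by lra.
have -> : A' = T.
  apply: (ls_min_on_unique D_coercive stepA); split => // Y YT.
  by rewrite -resid_eq; exact: A'_min.
have [-> | TA] := Hthr_cost_eq g_gt0 cost_eq; [by left | right].
exact: proper_card.
Qed.

Variable C : nat -> 'M[R]_(n, m).
Hypothesis steps : forall k, iht_step D V g (C k) (C k.+1).

Lemma iht_subseq_limit_local_min (phi : nat -> nat) L :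
  {homo phi : a b / (a < b)%N} -> (C \o phi) @ \oo --> L -> local_min D V g L.
Proof.
move=> phi_incr CL; apply: (ls_min_on_local_min g_gt0).
have [S S_freq] := finite_frequently (fun j => supp (thr_point (C (phi j.+1).-1))).
apply: (ls_min_on_supp (S := S)); apply: cvg_ls_min_on CL _ => N.
have [j Nj <-] := S_freq N.
exists j.+1 => //=; first exact: leqW.
have phi_gt0 : (0 < phi j.+1)%N := leq_ltn_trans (leq0n _) (phi_incr 0 j.+1 isT).
by move: (steps (phi j.+1).-1); rewrite prednK.
Qed.

Hypothesis D_coercive : coercive D.

(* C k.+1 is the unique least-squares solution on the threshold support of C k, so
   F (C k.+1) only depends on that support. *)
Lemma iht_Fobj_eventually_const :
  exists K, forall k, (K <= k)%N -> Fobj D V g (C k.+1) = Fobj D V g (C K.+1).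
Proof.
apply: (nonincreasing_eventually_const (s := fun k => supp (thr_point (C k)))).
  by move=> k; exact: iht_descent.
move=> k j S_eq; congr Fobj; apply: (ls_min_on_unique D_coercive (steps k)).
by rewrite /= S_eq; exact: steps.
Qed.

Lemma iht_eventually_const : exists K, forall k, (K <= k)%N -> C k = C K.
Proof.
have [K1 F_const] := iht_Fobj_eventually_const.
apply: (@eventually_const_potential _ C (fun k => norm20 (C k)) K1.+1) => k K1k.
have F_eq : Fobj D V g (C k.+1) = Fobj D V g (C k).
  have k_gt0 : (0 < k)%N by exact: leq_ltn_trans (leq0n K1) K1k.
  rewrite F_const; last exact: ltnW.
  by rewrite -(prednK k_gt0) F_const // -ltnS prednK.
have [-> | norm20_lt] := iht_step_eq D_coercive (steps k) F_eq; first by split.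
by split=> [|_]; [exact: ltnW | exact: norm20_lt].
Qed.

End IHT.

Theorem theorem1 (R : realType) (m n : nat) (ell : 'I_m -> nat)
    (D : forall i : 'I_m, 'M[R]_(ell i, n))
    (V : forall i : 'I_m, 'cV[R]_(ell i))
    (gamma : R) (C : nat -> 'M[R]_(n, m)) :
  (0 < m)%N -> (0 < n)%N ->
  (forall i : 'I_m, spec_norm_le ((D i)^T *m D i) 1) ->
  0 < gamma ->
  (forall k : nat, iht_step D V gamma (C k) (C k.+1)) ->
  [/\ (forall k : nat, Fobj D V gamma (C k.+1) <= Fobj D V gamma (C k)),
      (forall (phi : nat -> nat) (L : 'M[R]_(n, m)),
          {homo phi : a b / (a < b)%N} ->
          (C \o phi) @ \oo --> L -> local_min D V gamma L)
    & (coercive D ->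
         exists2 L : 'M[R]_(n, m), C @ \oo --> L & local_min D V gamma L)].
Proof.
move=> _ _ D_scaled gamma_gt0 steps.
split=> [k | phi L | D_coercive].
- exact: (iht_descent D_scaled gamma_gt0 (steps k)).
- exact: (iht_subseq_limit_local_min gamma_gt0 steps).
- have [K C_const] := iht_eventually_const D_scaled gamma_gt0 steps D_coercive.
  have C_cvg : C @ \oo --> C K.
    by apply: cvg_near_cst; near=> k; apply: C_const; near: k; exact: nbhs_infty_ge.
  exists (C K) => //.
  exact: (iht_subseq_limit_local_min gamma_gt0 steps (phi := id)).
Unshelve. all: by end_near.
Qed.
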